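(* Let $(X,d)$ be a separable complete metric space, $(\Omega,\mathsf{F},\mathbb{P})$ a probability space, $F:X\to[0,\infty]$ measurable with $\mathrm{zer}F:=\{z\in X\mid F(z)=0\}$ closed and non-empty, and $\phi:X\times X\to[0,\infty)$ a Carath\'eodory distance. Let $\tau:[0,\infty)\to[0,\infty)$ be convex and nondecreasing with $\tau(0)=0$ and $\tau(\varepsilon)>0$ for all $\varepsilon>0$, and let $D$ be a collection of $X$-valued random variables such that $\mathrm{dist}^\phi_{\mathrm{zer}F}(x)$ is integrable for all $x\in D$. If $\tau$ (restricted to $(0,\infty)$) is a modulus of $\phi$-regularity for $F$, then it is also a modulus of $\phi$-regularity for $F$ in mean w.r.t.\ $D$.
   Context: A Carath\'eodory distance is a function $\phi:X\times X\to[0,\infty)$ continuous in its left argument and Borel measurable in its right argument; $\mathrm{dist}^\phi_S(x):=\inf_{s\in S}\phi(s,x)$. A modulus of $\phi$-regularity for $F$ is a function $\tau:(0,\infty)\to(0,\infty)$ such that for all $\varepsilon>0$ and $x\in X$, $F(x)<\tau(\varepsilon)$ implies $\mathrm{dist}^\phi_{\mathrm{zer}F}(x)<\varepsilon$. A modulus of $\phi$-regularity for $F$ in mean w.r.t.\ $D$ is a function $\tau:(0,\infty)\to(0,\infty)$ such that for all $\varepsilon>0$ and $x\in D$, $\mathbb{E}[F(x)]<\tau(\varepsilon)$ implies $\mathbb{E}[\mathrm{dist}^\phi_{\mathrm{zer}F}(x)]<\varepsilon$. *)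

From HB Require Import structures.
From mathcomp Require Import all_boot all_order all_algebra.
From mathcomp Require Import all_classical all_reals all_analysis measurable_realfun.
Set Implicit Arguments. Unset Strict Implicit. Unset Printing Implicit Defensive.
Import Order.TTheory GRing.Theory Num.Theory.
Import numFieldNormedType.Exports.
Local Open Scope classical_set_scope.
Local Open Scope ring_scope.

Definition borelX (X : topologicalType) (A : set X) : Prop :=
  <<s [set U : set X | open U] >> A.

Definition separable_space (X : topologicalType) : Prop :=
  exists S : set X, countable S /\ closure S = setT.

Definition zer (X : Type) (R : realType) (F : X -> \bar R) : set X :=
  [set z | F z = 0%E].

Definition caratheodory_distance (R : realType) (X : pseudoMetricType R)
  (phi : X -> X -> R) : Prop :=
  [/\ (forall x y, 0 <= phi x y),
      (forall y, continuous (fun s => phi s y)) &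
      (forall s (B : set R), measurable B -> borelX ((fun y => phi s y) @^-1` B))].

Definition distphi (R : realType) (X : Type) (phi : X -> X -> R) (S : set X)
  (x : X) : R := inf [set phi s x | s in S].

Definition modulus_regularity (R : realType) (X : Type) (phi : X -> X -> R)
  (F : X -> \bar R) (tau : R -> R) : Prop :=
  forall (eps : R) (x : X), 0 < eps ->
    (F x < (tau eps)%:E)%E -> distphi phi (zer F) x < eps.

Definition modulus_regularity_mean (R : realType) (X : Type)
  (d : measure_display) (Omega : measurableType d) (P : probability Omega R)
  (phi : X -> X -> R) (F : X -> \bar R) (tau : R -> R) (D : set (Omega -> X)) : Prop :=
  forall (eps : R) (x : Omega -> X), 0 < eps -> D x ->
    (\int[P]_w F (x w) < (tau eps)%:E)%E ->
    (\int[P]_w (distphi phi (zer F) (x w))%:E < eps%:E)%E.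

From HB Require Import structures.
From mathcomp Require Import all_boot all_order all_algebra.
From mathcomp Require Import all_classical all_reals all_analysis measurable_realfun.
From mathcomp Require Import ring lra.
Set Implicit Arguments. Unset Strict Implicit. Unset Printing Implicit Defensive.
Import Order.TTheory GRing.Theory Num.Theory.
Import numFieldNormedType.Exports.
Local Open Scope classical_set_scope.
Local Open Scope ring_scope.

(* A convex [tau] with [tau 0 = 0] has a supporting line of positive slope
   [c] at [eps > 0], and the modulus of regularity gives [tau (dist x) <= F x]
   pointwise, so [tau eps + c (dist x - eps) <= F x].
   Taking expectations, [tau eps + c (E dist - eps) <= E F < tau eps], whence
   [E dist < eps]. *)

Section ConvexOnNonneg.
Variables (R : realType) (tau : R -> R).
Hypothesis tau_convex : forall a b t, 0 <= a -> 0 <= b -> 0 <= t <= 1 ->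
  tau (t * a + (1 - t) * b) <= t * tau a + (1 - t) * tau b.

Lemma convex_slope_le y e z : 0 <= y -> y < e -> e < z ->
  (tau e - tau y) / (e - y) <= (tau z - tau e) / (z - e).
Proof.
move=> y_ge0 lt_ye lt_ez.
pose t := (z - e) / (z - y).
have t_ge0 : 0 <= t by rewrite divr_ge0 //; lra.
have t_le1 : t <= 1 by rewrite ler_pdivrMr; lra.
have tz : t * (z - y) = z - e by rewrite mulfVK // subr_eq0 gt_eqF // (lt_trans lt_ye).
have e_conv : t * y + (1 - t) * z = e.
  have -> : t * y + (1 - t) * z = z - t * (z - y) by ring.
  by rewrite tz; ring.
have := @tau_convex y z t y_ge0 (ltW (le_lt_trans y_ge0 (lt_trans lt_ye lt_ez)))
  (introT andP (conj t_ge0 t_le1)).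
rewrite e_conv => tau_e_le.
rewrite ler_pdivrMr ?subr_gt0 // mulrAC ler_pdivlMr ?subr_gt0 //.
nra.
Qed.

(* The slope [c] is the supremum of the chord slopes to the left of [e]. *)
Lemma convex_support_line e : 0 < e ->
  exists2 c, (tau e - tau 0) / e <= c &
    forall y, 0 <= y -> tau e + c * (y - e) <= tau y.
Proof.
move=> e_gt0.
pose S := [set (tau e - tau y) / (e - y) | y in [set y | 0 <= y < e]].
have S0 : S ((tau e - tau 0) / e) by exists 0; rewrite /= ?subr0 ?lexx ?e_gt0.
have S_ub z : e < z -> ubound S ((tau z - tau e) / (z - e)).
  by move=> lt_ez _ [y /andP[y_ge0 lt_ye] <-]; apply: convex_slope_le.
have S_sup : has_sup S.
  split; first by exists ((tau e - tau 0) / e).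
  by exists ((tau (e + 1) - tau e) / (e + 1 - e)); apply: S_ub; lra.
exists (sup S) => [|y y_ge0]; first exact: sup_upper_bound.
have [lt_ye|lt_ey|->] := ltgtP y e; last by rewrite subrr mulr0 addr0.
- have : (tau e - tau y) / (e - y) <= sup S.
    by apply: sup_upper_bound => //; exists y; rewrite /= ?y_ge0.
  rewrite ler_pdivrMr ?subr_gt0 //; nra.
- have := ge_sup (ex_intro _ _ S0) (S_ub y lt_ey).
  rewrite ler_pdivlMr ?subr_gt0 //; nra.
Qed.

End ConvexOnNonneg.

Lemma distphi_ge0 (R : realType) (X : Type) (phi : X -> X -> R) (S : set X) x :
  S !=set0 -> (forall s, 0 <= phi s x) -> 0 <= distphi phi S x.
Proof.
move=> [s Ss] phi_ge0; apply: lb_le_inf; first by exists (phi s x), s.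
by move=> _ [t _ <-].
Qed.

Lemma modulus_regularity_le (R : realType) (X : Type) (phi : X -> X -> R)
    (F : X -> \bar R) (tau : R -> R) x :
  modulus_regularity phi F tau -> tau 0 = 0 -> (0 <= F x)%E ->
  0 <= distphi phi (zer F) x -> ((tau (distphi phi (zer F) x))%:E <= F x)%E.
Proof.
move=> tau_mod tau0 Fx_ge0; rewrite le_eqVlt => /predU1P[<-|dist_gt0].
  by rewrite tau0.
by rewrite leNgt; apply/negP => /(tau_mod _ _ dist_gt0); rewrite ltxx.
Qed.

Lemma integral_affine_minorant (R : realType) (d : measure_display)
    (Omega : measurableType d) (P : probability Omega R)
    (f : Omega -> \bar R) (g : Omega -> R) (a c : R) :
  measurable_fun setT f -> (forall w, 0 <= f w)%E ->
  P.-integrable setT (EFin \o g) ->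
  (forall w, ((a + c * g w)%:E <= f w)%E) ->
  (a%:E + c%:E * \int[P]_w (g w)%:E <= \int[P]_w f w)%E.
Proof.
move=> f_mes f_ge0 g_int minor.
have [If_fin|] := boolP ((\int[P]_w f w)%E \is a fin_num); last first.
  by rewrite ge0_fin_numE ?integral_ge0 // -leNgt leye_eq => /eqP ->; exact: leey.
have f_int : P.-integrable setT f.
  apply/integrableP; split => //.
  under eq_integral do rewrite gee0_abs //.
  by rewrite ltey_eq If_fin.
have cst_int := finite_measure_integrable_cst P a measurableT.
have aff_int := integrableD measurableT cst_int (integrableZl measurableT c g_int).
have := le_integral measurableT aff_int f_int (fun w _ => minor w).
rewrite (integralD measurableT cst_int (integrableZl measurableT c g_int)).
rewrite (integral_cst P measurableT a%:E) [X in (_ * X)%E]probability_setT.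
by rewrite mule1 integralZl.
Qed.

Theorem lemma3p8 (R : realType) (X : completePseudoMetricType R)
  (d : measure_display) (Omega : measurableType d) (P : probability Omega R)
  (F : X -> \bar R) (phi : X -> X -> R) (tau : R -> R) (D : set (Omega -> X)) :
  hausdorff_space X ->
  separable_space X ->
  (forall z, (0 <= F z)%E) ->
  (forall B : set (\bar R), measurable B -> borelX (F @^-1` B)) ->
  closed (zer F) ->
  zer F !=set0 ->
  caratheodory_distance phi ->
  (forall a b t, 0 <= a -> 0 <= b -> 0 <= t <= 1 ->
     tau (t * a + (1 - t) * b) <= t * tau a + (1 - t) * tau b) ->
  (forall a b, 0 <= a -> a <= b -> tau a <= tau b) ->
  tau 0 = 0 ->
  (forall eps, 0 < eps -> 0 < tau eps) ->
  (forall x, D x -> forall B : set X, borelX B -> measurable (x @^-1` B)) ->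
  (forall x, D x ->
     P.-integrable setT (fun w => (distphi phi (zer F) (x w))%:E)) ->
  modulus_regularity phi F tau ->
  modulus_regularity_mean P phi F tau D.
Proof.
move=> _ _ F_ge0 F_mes _ zerF_n0 [phi_ge0 _ _] tau_cvx _ tau0 tau_gt0 x_mes
  dist_int tau_mod eps x eps_gt0 Dx EF_lt.
have dist_ge0 w : 0 <= distphi phi (zer F) (x w) by exact: distphi_ge0.
have [c c_ge tau_supp] := convex_support_line tau_cvx eps_gt0.
have c_gt0 : 0 < c by apply: lt_le_trans c_ge; rewrite tau0 subr0 divr_gt0 ?tau_gt0.
have Fx_mes : measurable_fun setT (F \o x).
  by move=> _ B mB; rewrite setTI; apply: x_mes (F_mes B mB).
have minor w :
    ((tau eps - c * eps + c * distphi phi (zer F) (x w))%:E <= F (x w))%E.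
  apply: le_trans (modulus_regularity_le tau_mod tau0 _ _) => //.
  by rewrite lee_fin; have := tau_supp _ (dist_ge0 w); lra.
have Edist_fin := integrable_fin_num measurableT (dist_int x Dx).
have := integral_affine_minorant Fx_mes (fun=> F_ge0 _) (dist_int x Dx) minor.
rewrite -(fineK Edist_fin) -EFinM -EFinD lte_fin => Eaff_le.
have := le_lt_trans Eaff_le EF_lt; rewrite lte_fin => lt_tau_eps.
by rewrite -(ltr_pM2l c_gt0); lra.
Qed.
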